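(* Let $c,d\in\mathbb{R}$ with $c,d>0$. Then: (1) Let $j\in\mathbb{R}$ with $j>0$. The running time of Quicksort in the worst case, i.e. the unique solution $T\in\mathcal{RT}_c$ of $T(1)=c$, $T(n)=T(n-1)+jn$ for $n\ge2$, belongs to $\mathcal{O}(g_k)$, where $k=\max\left(\frac c4+\frac j2,\frac{3j}{5}\right)$ and, for $r>0$, $g_r(1)=c$ and $g_r(n)=rn^2$ for $n\ge2$. (2) The running time of Largetwo in the average case, i.e. the unique solution $T\in\mathcal{RT}_c$ of $T(1)=c$, $T(n)=T(n-1)+2-\frac1n$ for $n\ge2$, belongs to $\mathcal{O}(g_k)$, where $k=\max\left(\frac{2c+3}{2+2d},1\right)$ and, for $r>0$, $g_r(1)=c$ and $g_r(n)=r\,(2(n-1)-\log_2 n+d)$ for $n\ge2$.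
   Context: $\mathbb{N}$ is the set of positive integers, $\mathcal{RT}$ the set of functions $\mathbb{N}\to(0,\infty]$, and $\mathcal{RT}_c=\{f\in\mathcal{RT}:f(1)=c\}$. For $f,g\in\mathcal{RT}$, $f\in\mathcal{O}(g)$ means there exist $n_0\in\mathbb{N}$ and $C\ge0$ with $f(n)\le Cg(n)$ for all $n\ge n_0$. The running times of these algorithms as functions of input size $n$ are modeled as the solutions of the stated recurrences, with $c$ the cost of the base case (Largetwo finds the two largest entries of an array of size $n$). *)

From Stdlib Require Import Reals Lra Lia.
Open Scope R_scope.

(* Running times are indexed by positive integers; we use nat and only
   ever look at arguments n >= 1 (the value at 0 is irrelevant). *)

Definition bigO (f g : nat -> R) : Prop :=
  exists (n0 : nat) (C : R), (1 <= n0)%nat /\ 0 <= C /\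
    forall n : nat, (n0 <= n)%nat -> f n <= C * g n.

Definition log2 (x : R) : R := ln x / ln 2.

Definition g_quick (c r : R) (n : nat) : R :=
  if Nat.eqb n 1 then c else r * (INR n) ^ 2.

Definition g_large (c d r : R) (n : nat) : R :=
  if Nat.eqb n 1 then c else r * (2 * (INR n - 1) - log2 (INR n) + d).

From Stdlib Require Import Reals Lra Lia.
Open Scope R_scope.

(* Both recurrences telescope.  Quicksort gives T(n) = c + j (n (n + 1) / 2 - 1)
   <= (c + j) n^2, and Largetwo gives T(n) <= c + 2 (n - 1).  Since
   log2 n <= n - 1, the Largetwo comparison function dominates r (n - 1 + d), so
   both bounds are constant multiples of g_k for n >= 2; the precise value of k
   only matters through k > 0. *)

Lemma bigO_of_eventual_bound (f g h : nat -> R) (k B : R) (n0 : nat) :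
  (1 <= n0)%nat -> 0 < k -> 0 <= B ->
  (forall n, (n0 <= n)%nat -> f n <= B * h n) ->
  (forall n, (n0 <= n)%nat -> g n = k * h n) ->
  bigO f g.
Proof.
  intros hn0 hk hB hf hg. exists n0, (B / k). split; [exact hn0|]. split.
  - apply Rmult_le_pos; [exact hB|]. apply Rlt_le, Rinv_0_lt_compat, hk.
  - intros n hn. rewrite hg by exact hn.
    replace (B / k * (k * h n)) with (B * h n) by (field; lra). apply hf, hn.
Qed.

Lemma g_quick_ge2 (c r : R) (n : nat) :
  (2 <= n)%nat -> g_quick c r n = r * INR n ^ 2.
Proof.
  intros hn. unfold g_quick. replace (Nat.eqb n 1) with false; [reflexivity|].
  symmetry. apply Nat.eqb_neq. lia.
Qed.

Lemma g_large_ge2 (c d r : R) (n : nat) :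
  (2 <= n)%nat -> g_large c d r n = r * (2 * (INR n - 1) - log2 (INR n) + d).
Proof.
  intros hn. unfold g_large. replace (Nat.eqb n 1) with false; [reflexivity|].
  symmetry. apply Nat.eqb_neq. lia.
Qed.

Lemma INR_succ_le_pow2 (m : nat) : INR (S m) <= 2 ^ m.
Proof.
  induction m as [|m IH]; simpl pow.
  - simpl. lra.
  - rewrite S_INR. assert (1 <= 2 ^ m) by (apply pow_R1_Rle; lra). lra.
Qed.

Lemma log2_le_of_le_pow2 (x : R) (m : nat) : 0 < x -> x <= 2 ^ m -> log2 x <= INR m.
Proof.
  intros hx hxm. unfold log2.
  assert (hln2 : 0 < ln 2) by (rewrite <- ln_1; apply ln_increasing; lra).
  apply (Rmult_le_reg_r (ln 2)); [exact hln2|].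
  unfold Rdiv. rewrite Rmult_assoc, Rinv_l, Rmult_1_r by lra.
  rewrite <- ln_pow by lra.
  destruct (Rle_lt_or_eq_dec _ _ hxm) as [hlt|heq].
  - apply Rlt_le, ln_increasing; assumption.
  - rewrite heq. lra.
Qed.

Lemma log2_INR_le_pred (n : nat) : (1 <= n)%nat -> log2 (INR n) <= INR n - 1.
Proof.
  intros hn. destruct n as [|m]; [lia|].
  rewrite S_INR. replace (INR m + 1 - 1) with (INR m) by ring.
  rewrite <- S_INR. apply log2_le_of_le_pow2; [apply lt_0_INR; lia|].
  apply INR_succ_le_pow2.
Qed.

Lemma quicksort_rec_le (c j : R) (T : nat -> R) :
  0 <= c -> 0 <= j -> T 1%nat = c ->
  (forall n : nat, (2 <= n)%nat -> T n = T (n - 1)%nat + j * INR n) ->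
  forall n : nat, (1 <= n)%nat -> T n <= (c + j) * INR n ^ 2.
Proof.
  intros hc hj T1 TS n hn. destruct n as [|m]; [lia|]. clear hn.
  induction m as [|m IH].
  - rewrite T1. simpl. lra.
  - rewrite TS by lia. replace (S (S m) - 1)%nat with (S m) by lia.
    rewrite (S_INR (S m)). pose proof (pos_INR (S m)). nra.
Qed.

Lemma largetwo_rec_le (c : R) (T : nat -> R) :
  T 1%nat = c ->
  (forall n : nat, (2 <= n)%nat -> T n = T (n - 1)%nat + 2 - 1 / INR n) ->
  forall n : nat, (1 <= n)%nat -> T n <= c + 2 * (INR n - 1).
Proof.
  intros T1 TS n hn. destruct n as [|m]; [lia|]. clear hn.
  induction m as [|m IH].
  - rewrite T1. simpl. lra.
  - rewrite TS by lia. replace (S (S m) - 1)%nat with (S m) by lia.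
    assert (0 <= 1 / INR (S (S m))).
    { apply Rlt_le, Rdiv_lt_0_compat; [lra|apply lt_0_INR; lia]. }
    pose proof (S_INR (S m)). lra.
Qed.

Lemma largetwo_bound_le_g (c d : R) (n : nat) :
  0 <= c -> 0 < d -> (2 <= n)%nat ->
  c + 2 * (INR n - 1) <= (c + 2) * (2 * (INR n - 1) - log2 (INR n) + d).
Proof.
  intros hc hd hn.
  assert (hn1 : 1 <= INR n - 1) by (apply (le_INR 2) in hn; simpl in hn; lra).
  pose proof (log2_INR_le_pred n ltac:(lia)). nra.
Qed.

Theorem corollary13 (c d : R) (hc : 0 < c) (hd : 0 < d) :
  (forall (j : R), 0 < j ->
     forall T : nat -> R,
       T 1%nat = c ->
       (forall n : nat, (2 <= n)%nat -> T n = T (n - 1)%nat + j * INR n) ->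
       bigO T (g_quick c (Rmax (c / 4 + j / 2) (3 * j / 5))))
  /\
  (forall T : nat -> R,
     T 1%nat = c ->
     (forall n : nat, (2 <= n)%nat -> T n = T (n - 1)%nat + 2 - 1 / INR n) ->
     bigO T (g_large c d (Rmax ((2 * c + 3) / (2 + 2 * d)) 1))).
Proof.
  split.
  - intros j hj T T1 TS.
    apply (bigO_of_eventual_bound _ _ (fun n => INR n ^ 2)
             (Rmax (c / 4 + j / 2) (3 * j / 5)) (c + j) 2).
    + lia.
    + pose proof (Rmax_r (c / 4 + j / 2) (3 * j / 5)). lra.
    + lra.
    + intros n hn. apply (quicksort_rec_le c j); [lra | lra | exact T1 | exact TS | lia].
    + intros n hn. apply g_quick_ge2, hn.
  - intros T T1 TS.
    apply (bigO_of_eventual_bound _ _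
             (fun n => 2 * (INR n - 1) - log2 (INR n) + d)
             (Rmax ((2 * c + 3) / (2 + 2 * d)) 1) (c + 2) 2).
    + lia.
    + pose proof (Rmax_r ((2 * c + 3) / (2 + 2 * d)) 1). lra.
    + lra.
    + intros n hn. eapply Rle_trans.
      * apply (largetwo_rec_le c); [exact T1 | exact TS | lia].
      * apply largetwo_bound_le_g; [lra | exact hd | exact hn].
    + intros n hn. apply g_large_ge2, hn.
Qed.
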